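(* Let $(X,d)$ be a metric space, $k>0$, and let $\mathcal S$ be a semigroup acting on $X$ such that $\mathcal S s\subseteq s\mathcal S$ for every $s\in\mathcal S$. If the action $(\mathcal S,X)$ is orbit $k$-Lipschitzian, then it is strong-orbit $k$-Lipschitzian. In particular, this holds whenever $\mathcal S$ is a group or a commutative semigroup.
   Context: A semigroup action $(\mathcal S,X)$ is a map $\mathcal S\times X\to X$, $(s,x)\mapsto sx$, with $(st)x=s(tx)$. For $x\in X$ and nonempty $C\subseteq X$, $D(x,C)=\sup\{d(x,y):y\in C\}$; the orbit of $x$ is $o(x)=\{x\}\cup\{sx:s\in\mathcal S\}$. The action is orbit $k$-Lipschitzian if $d(sx,sy)\le k\,D(x,o(y))$ for all $x,y\in X$, $s\in\mathcal S$; it is strong-orbit $k$-Lipschitzian if $D(sx,o(sy))\le k\,D(x,o(y))$ for all $s\in\mathcal S$, $x,y\in X$. *)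

From mathcomp Require Import all_boot all_order all_algebra.
From mathcomp Require Import all_classical all_reals ereal.
Set Implicit Arguments. Unset Strict Implicit. Unset Printing Implicit Defensive.
Import Order.TTheory GRing.Theory Num.Theory.
Local Open Scope classical_set_scope.
Local Open Scope ring_scope.

Definition is_metric (R : realType) (X : Type) (d : X -> X -> R) : Prop :=
  [/\ (forall x y, 0 <= d x y),
      (forall x y, d x y = 0 <-> x = y),
      (forall x y, d x y = d y x) &
      (forall x y z, d x z <= d x y + d y z)].

Definition is_semigroup (S : Type) (mul : S -> S -> S) : Prop :=
  forall s t u, mul (mul s t) u = mul s (mul t u).

Definition is_action (S X : Type) (mul : S -> S -> S) (act : S -> X -> X) : Prop :=
  forall s t x, act (mul s t) x = act s (act t x).

Definition Dsup (R : realType) (X : Type) (d : X -> X -> R) (x : X) (C : set X)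
  : \bar R := ereal_sup [set (d x y)%:E | y in C].

Definition orbit (S X : Type) (act : S -> X -> X) (x : X) : set X :=
  [set x] `|` [set act s x | s in [set: S]].

Definition orbit_lipschitz (R : realType) (S X : Type) (d : X -> X -> R)
  (act : S -> X -> X) (k : R) : Prop :=
  forall (x y : X) (s : S),
    ((d (act s x) (act s y))%:E <= k%:E * Dsup d x (orbit act y))%E.

Definition strong_orbit_lipschitz (R : realType) (S X : Type) (d : X -> X -> R)
  (act : S -> X -> X) (k : R) : Prop :=
  forall (s : S) (x y : X),
    (Dsup d (act s x) (orbit act (act s y)) <= k%:E * Dsup d x (orbit act y))%E.

(* S s ⊆ s S for every s *)
Definition left_sub_right (S : Type) (mul : S -> S -> S) : Prop :=
  forall s t : S, exists u : S, mul t s = mul s u.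

Definition is_commutative (S : Type) (mul : S -> S -> S) : Prop :=
  forall s t, mul s t = mul t s.

Definition has_group_structure (S : Type) (mul : S -> S -> S) : Prop :=
  exists e : S, (forall s, mul e s = s /\ mul s e = s) /\
    (forall s, exists t, mul t s = e /\ mul s t = e).

(** If [t s = s u], then [t (s y) = s (u y)], so every point of the orbit of
    [s y] is [s w] for a point [w] whose orbit lies inside that of [y].  Hence
    [d(s x, s w) <= k D(x, o(w)) <= k D(x, o(y))], and taking the supremum over
    the orbit of [s y] gives the claim; none of the metric axioms is needed.
    Groups and commutative semigroups satisfy [S s ⊆ s S] with
    [u = s^-1 t s], resp. [u = t]. *)
From Pilot Require Import Defs.
From mathcomp Require Import all_boot all_order all_algebra.
From mathcomp Require Import all_classical all_reals ereal.
Set Implicit Arguments. Unset Strict Implicit. Unset Printing Implicit Defensive.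
Import Order.TTheory GRing.Theory Num.Theory.
Local Open Scope classical_set_scope.
Local Open Scope ring_scope.

Lemma group_left_sub_right (S : Type) (mul : S -> S -> S) :
  is_semigroup mul -> has_group_structure mul -> left_sub_right mul.
Proof.
move=> mulA [e [mule mulV]] s t.
have [s' [_ ss'_e]] := mulV s.
by exists (mul s' (mul t s)); rewrite -mulA ss'_e (proj1 (mule _)).
Qed.

Lemma commutative_left_sub_right (S : Type) (mul : S -> S -> S) :
  is_commutative mul -> left_sub_right mul.
Proof. by move=> mulC s t; exists t; rewrite mulC. Qed.

Lemma Dsup_subset (R : realType) (X : Type) (d : X -> X -> R) (x : X)
    (A B : set X) :
  A `<=` B -> (Dsup d x A <= Dsup d x B)%E.
Proof. by move=> AB; apply: ereal_sup_le => _ [y /AB By <-]; exists y. Qed.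

Section OrbitAction.
Variables (S X : Type) (mul : S -> S -> S) (act : S -> X -> X).
Hypothesis actM : is_action mul act.

Lemma orbit_act_sub (u : S) (y : X) :
  Defs.orbit act (act u y) `<=` Defs.orbit act y.
Proof.
move=> _ [->|[v _ <-]]; right; first by exists u.
by exists (mul v u) => //; rewrite actM.
Qed.

Lemma orbit_act_left_sub_right :
  left_sub_right mul -> forall (s : S) (y z : X), Defs.orbit act (act s y) z ->
  exists2 w, Defs.orbit act w `<=` Defs.orbit act y & z = act s w.
Proof.
move=> mul_sub s y _ [->|[t _ <-]]; first by exists y.
have [u tsE] := mul_sub s t.
by exists (act u y); [exact: orbit_act_sub | rewrite -actM tsE actM].
Qed.

Lemma orbit_lipschitz_strong (R : realType) (d : X -> X -> R) (k : R) :
  0 <= k -> left_sub_right mul ->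
  orbit_lipschitz d act k -> strong_orbit_lipschitz d act k.
Proof.
move=> k_ge0 mul_sub act_lip s x y.
apply: ge_ereal_sup => _ [z /(orbit_act_left_sub_right mul_sub) [w ow_sub ->] <-].
apply: le_trans (act_lip x w s) _.
by apply: lee_wpmul2l; [rewrite lee_fin | exact: Dsup_subset].
Qed.

End OrbitAction.

Theorem lemma3p10 (R : realType) (X S : Type) (d : X -> X -> R)
  (mul : S -> S -> S) (act : S -> X -> X) (k : R) :
  is_metric d -> is_semigroup mul -> is_action mul act -> (0 < k)%R ->
  (left_sub_right mul \/ has_group_structure mul \/ is_commutative mul) ->
  orbit_lipschitz d act k -> strong_orbit_lipschitz d act k.
Proof.
move=> _ mulA actM k_gt0 mul_cases.
apply: (orbit_lipschitz_strong actM (ltW k_gt0)).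
case: mul_cases => [//|[]]; first exact: group_left_sub_right.
exact: commutative_left_sub_right.
Qed.
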